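(* Let $n\geq 2$ be an integer. Let $(A,\cdot)$ be a unital commutative associative algebra over $\mathbb{C}$ with unit $1$, and let $[\cdot,\ldots,\cdot]:A^n\to A$ be an $n$-ary bracket such that $(A,[\cdot,\ldots,\cdot])$ is an $n$-Lie algebra. Suppose that for all $u_1,\ldots,u_n\in A$, $$[u_1,\ldots,u_n]=\sum_{i=1}^{n}(-1)^{i-1}u_i\,[1,u_1,\ldots,\hat{u}_i,\ldots,u_n]$$ (where $\hat{u}_i$ means that $u_i$ is omitted), and $$[1,u_1u_2,u_3,\ldots,u_n]=u_1[1,u_2,u_3,\ldots,u_n]+u_2[1,u_1,u_3,\ldots,u_n].$$ Then $(A,\cdot,[\cdot,\ldots,\cdot])$ is a strong transposed Poisson $n$-Lie algebra.
   Context: An $n$-Lie algebra is a vector space $L$ with an $n$-linear skew-symmetric bracket $[\cdot,\ldots,\cdot]$ satisfying the generalized Jacobi identity $[[x_1,\ldots,x_n],y_2,\ldots,y_n]=\sum_{i=1}^n[x_1,\ldots,x_{i-1},[x_i,y_2,\ldots,y_n],x_{i+1},\ldots,x_n]$ for all $x_i,y_j\in L$. A transposed Poisson $n$-Lie algebra is a triple $(A,\cdot,[\cdot,\ldots,\cdot])$ where $(A,\cdot)$ is a commutative associative algebra, $(A,[\cdot,\ldots,\cdot])$ is an $n$-Lie algebra, and for all $h,a_1,\ldots,a_n\in A$: $n\,h\,[a_1,\ldots,a_n]=\sum_{i=1}^n[a_1,\ldots,h a_i,\ldots,a_n]$ (with $ha_i$ in the $i$-th slot). It is called strong if moreover for all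 $h,y_1,y_2,x_1,\ldots,x_{n-1}\in A$: $$y_1[hy_2,x_1,\ldots,x_{n-1}]-y_2[hy_1,x_1,\ldots,x_{n-1}]+\sum_{i=1}^{n-1}(-1)^{i-1}hx_i[y_1,y_2,x_1,\ldots,\hat{x}_i,\ldots,x_{n-1}]=0.$$ *)

From HB Require Import structures.
From mathcomp Require Import all_boot all_order all_algebra all_fingroup.
From mathcomp Require Import complex Rstruct.
From Stdlib Require Import Rdefinitions.
Set Implicit Arguments. Unset Strict Implicit. Unset Printing Implicit Defensive.
Import Order.TTheory GRing.Theory Num.Theory.
Local Open Scope ring_scope.

Notation CC := (complex R).


Section NLie.
Variables (K : fieldType) (A : comAlgType K) (n : nat).
(* An n-ary bracket is a map A^n -> A, arguments indexed by 'I_n (slot i = x_{i+1}). *)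
Variable br : ('I_n -> A) -> A.

Definition setslot (f : 'I_n -> A) (i : 'I_n) (a : A) : 'I_n -> A :=
  fun j => if j == i then a else f j.
Definition set0slot (a : A) (f : 'I_n -> A) : 'I_n -> A :=
  fun j => if val j == 0%N then a else f j.
Definition set01slot (a b : A) (f : 'I_n -> A) : 'I_n -> A :=
  fun j => if val j == 0%N then a else if val j == 1%N then b else f j.
(* (a, u_0, ..., \hat{u_i}, ..., u_{n-1})  (0-based indexing of u) *)
Definition omit_front (a : A) (u : 'I_n -> A) (i : 'I_n) : 'I_n -> A :=
  fun j => if val j == 0%N then a else u (insubd j (bump i (val j).-1)).
(* (a, b, x_1, ..., \hat{x_i}, ..., x_{n-1})  for 1 <= i <= n-1; slot 0 of x unused *)
Definition omit_front2 (a b : A) (x : 'I_n -> A) (i : 'I_n) : 'I_n -> A :=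
  fun j => if val j == 0%N then a else if val j == 1%N then b
           else x (insubd j (bump i (val j).-1)).

Definition nlinear : Prop :=
  forall (f : 'I_n -> A) (i : 'I_n) (c : K) (a b : A),
    br (setslot f i (c *: a + b)) = c *: br (setslot f i a) + br (setslot f i b).

Definition skew_symmetric : Prop :=
  forall (s : {perm 'I_n}) (f : 'I_n -> A),
    br (fun j => f (s j)) = (-1) ^+ (odd_perm s) * br f.

(* [[x_1..x_n], y_2..y_n] = sum_i [x_1,..,[x_i,y_2..y_n],..,x_n];
   y is given as a map 'I_n -> A whose slot 0 is ignored. *)
Definition gen_jacobi : Prop :=
  forall x y : 'I_n -> A,
    br (set0slot (br x) y) = \sum_(i < n) br (setslot x i (br (set0slot (x i) y))).

Definition is_nLie : Prop := [/\ nlinear, skew_symmetric & gen_jacobi].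

Definition transposed_identity : Prop :=
  forall (h : A) (a : 'I_n -> A),
    n%:R * h * br a = \sum_(i < n) br (setslot a i (h * a i)).

Definition is_transposed_Poisson_nLie : Prop := is_nLie /\ transposed_identity.

(* strong condition: x_1..x_{n-1} are the slots 1..n-1 of x (slot 0 unused) *)
Definition strong_identity : Prop :=
  forall (h y1 y2 : A) (x : 'I_n -> A),
    y1 * br (set0slot (h * y2) x) - y2 * br (set0slot (h * y1) x)
    + \sum_(i < n | val i != 0%N)
        (-1) ^+ (val i).-1 * h * x i * br (omit_front2 y1 y2 x i) = 0.

Definition is_strong_transposed_Poisson_nLie : Prop :=
  is_transposed_Poisson_nLie /\ strong_identity.
End NLie.

From HB Require Import structures.
From mathcomp Require Import all_boot all_order all_algebra all_fingroup.
From mathcomp Require Import complex Rstruct.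
From Stdlib Require Import Rdefinitions FunctionalExtensionality.
From mathcomp Require Import zify ring.
Set Implicit Arguments.
Unset Strict Implicit.
Unset Printing Implicit Defensive.
Import GRing.Theory.
Local Open Scope ring_scope.

(* The first hypothesis, with the factor [1] moved from slot 0 to slot i by
   skew-symmetry, reads [u] = sum_i u_i [u with u_i replaced by 1]; the second
   one transports by skew-symmetry to any two slots.  Together they make
   z |-> [.., z, ..] (any fixed slot) a first-order differential operator:
     [.., ab, ..] = a [.., b, ..] + b [.., a, ..] - ab [.., 1, ..],
   and give the Euler-type identity sum_i u_i [u with u_i replaced by h] = h [u],
   whose cross terms cancel in pairs by skew-symmetry.  Both the transposed and
   the strong identity then reduce to ring identities. *)

Lemma sum_offdiag_antisym (V : zmodType) (n : nat) (c : 'I_n -> 'I_n -> V) :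
  (forall i j, i != j -> c j i = - c i j) ->
  \sum_i \sum_(j | j != i) c i j = 0.
Proof.
move=> c_antisym.
have split_offdiag i : \sum_(j < n | j != i) c i j
    = \sum_(j < n | (j < i)%nat) c i j + \sum_(j < n | (i < j)%nat) c i j.
  rewrite (bigID (fun j : 'I_n => (j < i)%nat)) /=; congr (_ + _); apply: eq_bigl => j;
    by rewrite -val_eqE /=; case: ltngtP.
rewrite (eq_bigr _ (fun i _ => split_offdiag i)) big_split /=.
rewrite [X in _ + X](exchange_big_dep xpredT) //= -big_split /=.
apply: big1 => i _; rewrite -big_split /=; apply: big1 => j lt_ji.
by rewrite c_antisym ?addNr // -val_eqE /= ltn_eqF.
Qed.

Lemma exists_perm_pair (T : finType) (x0 x1 y0 y1 : T) : x0 != x1 -> y0 != y1 ->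
  exists s : {perm T}, s x0 = y0 /\ s x1 = y1.
Proof.
move=> neq_x01 neq_y01.
have neq_y1x0 : tperm x0 y0 y1 != x0.
  by rewrite -{2}[x0](tpermR x0 y0) (inj_eq perm_inj) eq_sym.
exists (tperm x1 (tperm x0 y0 y1) * tperm x0 y0)%g; rewrite !permM; split.
  by rewrite [tperm x1 _ x0]tpermD; [apply: tpermL | rewrite eq_sym |].
by rewrite tpermL tpermK.
Qed.

Section SlotUpdate.
Variables (K : fieldType) (A : comAlgType K) (n : nat).
Implicit Types (f : 'I_n -> A) (i j : 'I_n) (a b : A).

Lemma setslot_id f i : setslot f i (f i) = f.
Proof. by apply: functional_extensionality => j; rewrite /setslot; case: eqP => [->|]. Qed.

Lemma setslot_eq f i a : setslot f i a i = a.
Proof. by rewrite /setslot eqxx. Qed.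

Lemma setslot_neq f i j a : j != i -> setslot f i a j = f j.
Proof. by rewrite /setslot => /negbTE ->. Qed.

Lemma setslotK f i a b : setslot (setslot f i a) i b = setslot f i b.
Proof. by apply: functional_extensionality => j; rewrite /setslot; case: (j == i). Qed.

Lemma setslotC f i j a b : i != j ->
  setslot (setslot f i a) j b = setslot (setslot f j b) i a.
Proof.
move=> neq_ij; apply: functional_extensionality => k; rewrite /setslot.
by case: (eqVneq k j) => [->|//]; rewrite eq_sym (negbTE neq_ij).
Qed.

End SlotUpdate.

Section SkewBracket.
Variables (K : fieldType) (A : comAlgType K) (n : nat) (br : ('I_n -> A) -> A).
Hypothesis skew : skew_symmetric br.
Implicit Types (f u : 'I_n -> A) (i j : 'I_n) (a b c : A).

Lemma br_tperm f i j : i != j -> br (f \o tperm i j) = - br f.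
Proof. by move=> neq_ij; rewrite [LHS]skew odd_tperm neq_ij expr1 mulN1r. Qed.

Lemma br_setslot_swap f i j a b : i != j ->
  br (setslot (setslot f i a) j b) = - br (setslot (setslot f i b) j a).
Proof.
move=> neq_ij; rewrite -(br_tperm _ neq_ij); congr br.
apply: functional_extensionality => k /=; rewrite /setslot.
case: tpermP => [->|->|/eqP ne_ki /eqP ne_kj]; rewrite ?eqxx.
- by rewrite (negbTE neq_ij).
- by rewrite (negbTE neq_ij).
- by rewrite (negbTE ne_ki) (negbTE ne_kj).
Qed.

Lemma br_omit_front c u i :
  br (omit_front c u i) = (-1) ^+ i * br (setslot u i c).
Proof.
case: i => m; elim: m u => [|m IHm] u lt_m_n.
  rewrite mul1r; congr br; apply: functional_extensionality => j.
  rewrite /omit_front /setslot -val_eqE /=; case: eqP => // /eqP j_neq0.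
  congr u; apply: val_inj; have := ltn_ord j.
  by rewrite val_insubd /bump /=; case: ifP; lia.
pose i := Ordinal (ltnW lt_m_n); pose i' := Ordinal lt_m_n.
have neq_ii' : i != i' by rewrite -val_eqE /= neq_ltn ltnSn.
have shift : omit_front c u i' = omit_front c (u \o tperm i i') i.
  apply: functional_extensionality => j; rewrite /omit_front /=.
  case: eqP => // /eqP j_neq0; congr u; apply: val_inj.
  have lt_jn := ltn_ord j.
  case: tpermP => [/(congr1 val)|/(congr1 val)|/eqP + /eqP];
    rewrite -?val_eqE /= !val_insubd /bump /=; case: ifP; case: ifP; lia.
have setslot_tperm : setslot (u \o tperm i i') i c = setslot u i' c \o tperm i i'.
  apply: functional_extensionality => j; rewrite /setslot /=.
  case: tpermP => [->|->|/eqP ne_ji /eqP ne_ji']; rewrite ?eqxx //.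
    by rewrite eq_sym !(negbTE neq_ii').
  by rewrite (negbTE ne_ji) (negbTE ne_ji').
by rewrite shift IHm -/i setslot_tperm br_tperm // exprS mulN1r mulrN mulNr.
Qed.

Section Expansion.
Hypothesis expansion : forall u,
  br u = \sum_(i < n) (-1) ^+ (val i) * u i * br (omit_front 1 u i).

Lemma br_expand u : br u = \sum_i u i * br (setslot u i 1).
Proof.
rewrite expansion; apply: eq_bigr => i _.
by rewrite br_omit_front -mulrA mulrCA signrMK.
Qed.

Lemma br_setslot_expand f i a :
  br (setslot f i a)
  = a * br (setslot f i 1) + \sum_(j | j != i) f j * br (setslot (setslot f j 1) i a).
Proof.
rewrite br_expand (bigD1 i) //= setslot_eq setslotK; congr (_ + _).
by apply: eq_bigr => j neq_ji; rewrite setslot_neq // setslotC // eq_sym.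
Qed.

Lemma sum_mul_br_setslot f a : \sum_i f i * br (setslot f i a) = a * br f.
Proof.
under eq_bigr do rewrite br_setslot_expand mulrDr.
rewrite big_split /= [X in _ + X](eq_bigr _ (fun i _ => mulr_sumr _ _ _ _)).
rewrite sum_offdiag_antisym ?addr0 => [|i j neq_ij].
  by rewrite [in RHS]br_expand mulr_sumr; apply: eq_bigr => i _; rewrite mulrCA.
by rewrite br_setslot_swap // setslotC // !mulrN mulrCA.
Qed.

Section UnitLeibniz.
Hypothesis n_gt1 : (1 < n)%nat.
Hypothesis unit_leibniz : forall (a b : A) (u : 'I_n -> A),
  br (set01slot 1 (a * b) u) = a * br (set01slot 1 b u) + b * br (set01slot 1 a u).

Let i0 : 'I_n := Ordinal (ltnW n_gt1).
Let i1 : 'I_n := Ordinal n_gt1.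

Lemma br_unit_slot_mul f j k a b : j != k ->
  br (setslot (setslot f j 1) k (a * b))
  = a * br (setslot (setslot f j 1) k b) + b * br (setslot (setslot f j 1) k a).
Proof.
move=> neq_jk; have [s [s0 s1]] := @exists_perm_pair _ i0 i1 j k isT neq_jk.
have to01 c : setslot (setslot f j 1) k c \o s
              = set01slot 1 c (setslot (setslot f j 1) k 0 \o s).
  apply: functional_extensionality => l; rewrite /set01slot /=.
  case: eqP => [l0|/eqP l_neq0].
    have -> : l = i0 by apply: val_inj.
    by rewrite s0 setslot_neq // setslot_eq.
  case: eqP => [l1|/eqP l_neq1].
    have -> : l = i1 by apply: val_inj.
    by rewrite s1 !setslot_eq.
  have neq_s0 : s l != j by rewrite -s0 (inj_eq perm_inj) -val_eqE.
  have neq_s1 : s l != k by rewrite -s1 (inj_eq perm_inj) -val_eqE.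
  by rewrite !setslot_neq.
(* The sign of [s] appears on every term and cancels. *)
have := unit_leibniz a b (setslot (setslot f j 1) k 0 \o s).
rewrite -!to01 !skew (mulrCA a) (mulrCA b) -mulrDr.
by move/(congr1 ( *%R ((-1) ^+ odd_perm s))); rewrite !signrMK.
Qed.

Lemma br_setslot_mul f i a b :
  br (setslot f i (a * b))
  = a * br (setslot f i b) + b * br (setslot f i a) - a * b * br (setslot f i 1).
Proof.
have derivation : \sum_(j | j != i) f j * br (setslot (setslot f j 1) i (a * b))
    = a * \sum_(j | j != i) f j * br (setslot (setslot f j 1) i b)
      + b * \sum_(j | j != i) f j * br (setslot (setslot f j 1) i a).
  rewrite !mulr_sumr -big_split /=; apply: eq_bigr => j neq_ji.
  by rewrite br_unit_slot_mul //; ring.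
rewrite (br_setslot_expand f i (a * b)) (br_setslot_expand f i a).
by rewrite (br_setslot_expand f i b) derivation; ring.
Qed.

Lemma br_transposed_identity : transposed_identity br.
Proof.
move=> h a; under eq_bigr do rewrite br_setslot_mul setslot_id.
rewrite sumrB big_split /= sumr_const card_ord sum_mul_br_setslot.
rewrite (eq_bigr _ (fun i _ => esym (mulrA h _ _))) -mulr_sumr -br_expand.
by rewrite addrK -mulrA mulr_natl.
Qed.

Lemma set0slotE a f : set0slot a f = setslot f i0 a.
Proof. by apply: functional_extensionality => j; rewrite /set0slot /setslot -val_eqE. Qed.

Lemma omit_front2E a b f i : (0 < i)%nat ->
  omit_front2 a b f i = omit_front a (setslot f i0 b) i.
Proof.
move=> i_gt0; apply: functional_extensionality => -[[|[|k]] lt_jn];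
  rewrite /omit_front2 /omit_front //=.
  rewrite (_ : insubd _ _ = i0) ?setslot_eq //; apply: val_inj.
  by rewrite val_insubd /bump /=; case: ifP; lia.
by rewrite setslot_neq // -val_eqE val_insubd /bump /=; case: ifP; lia.
Qed.

Lemma br_strong_identity : strong_identity br.
Proof.
move=> h y1 y2 x; rewrite !set0slotE.
have term i : val i != 0%nat ->
    (-1) ^+ (val i).-1 * h * x i * br (omit_front2 y1 y2 x i)
    = - (h * (setslot x i0 y2 i * br (setslot (setslot x i0 y2) i y1))).
  rewrite -lt0n => i_gt0.
  have sign : (-1) ^+ i.-1 * (-1) ^+ i = -1 :> A.
    by rewrite -{2}(prednK i_gt0) exprS mulrCA -expr2 sqrr_sign mulr1.
  rewrite omit_front2E // br_omit_front setslot_neq; last by rewrite -val_eqE /= -lt0n.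
  transitivity ((-1) ^+ i.-1 * (-1) ^+ i
                * (h * (x i * br (setslot (setslot x i0 y2) i y1)))); first by ring.
  by rewrite sign mulN1r.
have sum_off : \sum_(i < n | val i != 0%nat)
      setslot x i0 y2 i * br (setslot (setslot x i0 y2) i y1)
    = y1 * br (setslot x i0 y2) - y2 * br (setslot x i0 y1).
  rewrite -(sum_mul_br_setslot (setslot x i0 y2)) [in RHS](bigD1 i0) //=.
  rewrite setslot_eq setslotK addrAC subrr add0r.
  by apply: eq_bigl => i; rewrite -val_eqE.
rewrite (eq_bigr _ term) sumrN -mulr_sumr sum_off !br_setslot_mul; ring.
Qed.

End UnitLeibniz.

End Expansion.

End SkewBracket.

Theorem mainTheorem1 (n : nat) (hn : leq 2 n) (A : comAlgType CC)
  (br : ('I_n -> A) -> A)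
  (hLie : is_nLie br)
  (h1 : forall u : 'I_n -> A,
      br u = \sum_(i < n) (-1) ^+ (val i) * u i * br (omit_front 1 u i))
  (h2 : forall (u1 u2 : A) (u : 'I_n -> A),
      br (set01slot 1 (u1 * u2) u)
      = u1 * br (set01slot 1 u2 u) + u2 * br (set01slot 1 u1 u)) :
  is_strong_transposed_Poisson_nLie br.
Proof.
have [_ skew _] := hLie.
split; first split=> //.
  exact: br_transposed_identity skew h1 hn h2.
exact: br_strong_identity skew h1 hn h2.
Qed.
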